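(* Let $s$ be a strong divisor of a local ring $R$ that is not a unit, and let $S:=R_s$, so that $R\subset S$ is Prüfer. Set $P:=\bigcap_{n\in\mathbb N}Rs^n$. Then $P$ is a prime ideal of $R$ such that the set $\{Q\in\mathrm{Spec}(R): Q\subseteq P\}$ is open in $\mathrm{Spec}(R)$ (in fact equal to $\mathrm D(s)$); moreover $S=R_P$, $PS=P$, $P$ is a divided prime ideal of $R$ (i.e. comparable under inclusion to every ideal of $R$), and $R/P$ is a valuation domain whose quotient field is $S/P$.
   Context: All rings are commutative with identity; ''local'' means having a unique maximal ideal. A strong divisor of a local ring $R$ is a regular element $t\in R$ such that $Rt$ is comparable under inclusion with every ideal of $R$. $\mathrm D(s)=\{Q\in\mathrm{Spec}(R): s\notin Q\}$. An extension $A\subseteq B$ is Prüfer if $A\subseteq C$ is a flat epimorphism for each intermediate ring $C$. *)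

From HB Require Import structures.
From mathcomp Require Import all_boot all_algebra.
Set Implicit Arguments. Unset Strict Implicit. Unset Printing Implicit Defensive.
Import GRing.Theory.
Local Open Scope ring_scope.

Section CommAlg.
Variable R : comUnitRingType.

Definition is_ideal (I : R -> Prop) : Prop :=
  I 0 /\ (forall x y, I x -> I y -> I (x + y)) /\ (forall r x, I x -> I (r * x)).

Definition subset_of (I J : R -> Prop) : Prop := forall x, I x -> J x.

Definition is_prime_ideal (I : R -> Prop) : Prop :=
  is_ideal I /\ ~ I 1 /\ (forall a b, I (a * b) -> I a \/ I b).

Definition is_maximal_ideal (I : R -> Prop) : Prop :=
  is_ideal I /\ ~ I 1 /\
  (forall J, is_ideal J -> subset_of I J -> subset_of J I \/ J 1).

Definition is_local_ring : Prop :=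
  exists M, is_maximal_ideal M /\
    forall N, is_maximal_ideal N -> forall x, N x <-> M x.

Definition regular (t : R) : Prop := forall x, t * x = 0 -> x = 0.

Definition principal (t : R) : R -> Prop := fun x => exists r, x = r * t.

Definition strong_divisor (t : R) : Prop :=
  regular t /\ forall I, is_ideal I ->
    subset_of (principal t) I \/ subset_of I (principal t).

Definition D (s : R) (Q : R -> Prop) : Prop := ~ Q s.

Definition zariski_open (U : (R -> Prop) -> Prop) : Prop :=
  forall Q, is_prime_ideal Q -> U Q ->
    exists f, D f Q /\ forall Q', is_prime_ideal Q' -> D f Q' -> U Q'.

Definition divided (P : R -> Prop) : Prop :=
  is_prime_ideal P /\
  forall I, is_ideal I -> subset_of I P \/ subset_of P I.

Definition powers (s : R) : R -> Prop := fun m => exists n, m = s ^+ n.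
Definition compl (P : R -> Prop) : R -> Prop := fun m => ~ P m.

Definition bigcap_pow (s : R) : R -> Prop :=
  fun x => forall n : nat, principal (s ^+ n) x.
End CommAlg.

(* f : R -> S is a localization of R at the multiplicative set M
   (standard characterisation up to unique isomorphism, Atiyah-Macdonald 3.2) *)
Definition is_localization (R S : comUnitRingType) (M : R -> Prop)
  (f : {rmorphism R -> S}) : Prop :=
  (forall m, M m -> f m \is a GRing.unit) /\
  (forall x, f x = 0 -> exists m, M m /\ x * m = 0) /\
  (forall y, exists a m, M m /\ y * f m = f a).

Definition extended_ideal (R S : comUnitRingType) (f : {rmorphism R -> S})
  (I : R -> Prop) : S -> Prop :=
  fun y => forall J : S -> Prop, is_ideal J -> (forall x, I x -> J (f x)) -> J y.

Definition image_ideal (R S : comUnitRingType) (f : {rmorphism R -> S})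
  (I : R -> Prop) : S -> Prop := fun y => exists x, I x /\ y = f x.

(* R/P is a valuation domain: P prime and for all a b, the class of a divides
   the class of b in R/P or vice versa. *)
Definition quotient_valuation_domain (R : comUnitRingType) (P : R -> Prop) : Prop :=
  is_prime_ideal P /\
  forall a b : R, (exists c, P (b - c * a)) \/ (exists c, P (a - c * b)).

(* S/J is (via f) the quotient field of R/P: J is maximal in S (S/J a field),
   the induced map R/P -> S/J is injective (f^-1(J) = P), and every element
   of S/J is a fraction of elements of R/P. *)
Definition quotient_field_of (R S : comUnitRingType) (f : {rmorphism R -> S})
  (P : R -> Prop) (J : S -> Prop) : Prop :=
  is_maximal_ideal J /\
  (forall x, J (f x) <-> P x) /\
  (forall y, exists a b, ~ P b /\ J (y * f b - f a)).

From HB Require Import structures.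
From mathcomp Require Import all_boot all_algebra.
From mathcomp Require Import ring.
From Stdlib Require Import Classical_Prop.
Import GRing.Theory.
Local Open Scope ring_scope.

(* The key observation is the
   dichotomy "s^n divides x, or x divides s^n" (by induction on n, comparing
   Rs with the ideal R r where x = r s^(n-1)).  Consequently x lies outside P
   exactly when x divides some power of s.
   Since s is regular, every element of P is divisible by every power of s
   inside P, and the localization f : R -> R_s is injective; hence f(P) is
   already an ideal of R_s (so P R_s = f(P)), the elements outside P become
   units (so R_s is also the localization at R \ P), and every element of R_s
   outside f(P) is a unit, i.e. P R_s is maximal and R_s / P R_s is the
   fraction field of R/P. *)

Lemma is_ideal_ext {T : comUnitRingType} (J K : T -> Prop) :
  (forall y, J y <-> K y) -> is_ideal K -> is_ideal J.
Proof.
move=> E [K0 [KD KM]]; split; first exact/E.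
split; first by move=> x y /E Kx /E Ky; apply/E; apply: KD.
by move=> r x /E Kx; apply/E; apply: KM.
Qed.

Lemma principal_is_ideal {T : comUnitRingType} (t : T) : is_ideal (principal t).
Proof.
split; first by exists 0; rewrite mul0r.
split.
- by move=> x y [a ->] [b ->]; exists (a + b); rewrite mulrDl.
- by move=> r x [a ->]; exists (r * a); rewrite mulrA.
Qed.

Lemma prime_pow_mem {T : comUnitRingType} (Q : T -> Prop) (t : T) n :
  is_prime_ideal Q -> Q (t ^+ n) -> Q t.
Proof.
move=> [_ [Q1 Qprime]]; elim: n => [|n IH]; first by rewrite expr0.
by rewrite exprS => /Qprime [].
Qed.

Section PowerIntersection.
Context {R : comUnitRingType} {s : R}.

Local Notation P := (bigcap_pow s).

Lemma bigcap_pow_ideal : is_ideal P.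
Proof.
split; first by move=> n; exists 0; rewrite mul0r.
split.
- move=> x y Px Py n; have [a ->] := Px n; have [b ->] := Py n.
  by exists (a + b); rewrite mulrDl.
- by move=> r x Px n; have [a ->] := Px n; exists (r * a); rewrite mulrA.
Qed.

Hypothesis s_reg : regular s.

Lemma regular_pow n : regular (s ^+ n).
Proof.
elim: n => [|n IH] x; first by rewrite expr0 mul1r.
by rewrite exprS -mulrA => /s_reg /IH.
Qed.

Lemma bigcap_pow_cofactor x n : P x -> exists r, P r /\ x = r * s ^+ n.
Proof.
move=> Px; have [r xE] := Px n; exists r; split => // m.
have [q xE'] := Px (m + n)%N; exists q; apply: subr0_eq; apply: (regular_pow n).
have -> : s ^+ n * (r - q * s ^+ m) = r * s ^+ n - q * (s ^+ m * s ^+ n) by ring.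
by rewrite -exprD -xE -xE' subrr.
Qed.

Hypothesis s_nonunit : s \notin GRing.unit.

(* No power of s lies in P: s^k = r s^(k+1) would make s a unit. *)
Lemma pow_notin_bigcap k : ~ P (s ^+ k).
Proof.
move=> Pk; have [r kE] := Pk k.+1.
move/negP: s_nonunit; apply; apply/unitrPr; exists r.
apply/esym/subr0_eq; apply: (regular_pow k).
have -> : s ^+ k * (1 - s * r) = s ^+ k - r * (s * s ^+ k) by ring.
by rewrite -exprS -kE subrr.
Qed.

Hypothesis s_cmp : forall I, is_ideal I ->
  subset_of (principal s) I \/ subset_of I (principal s).

Lemma pow_divides_or_divided x n :
  principal (s ^+ n) x \/ exists c, s ^+ n = c * x.
Proof.
elim: n => [|n [[r xE]|[c cE]]].
- by left; exists x; rewrite expr0 mulr1.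
- case: (s_cmp _ (principal_is_ideal r)) => sub.
  + have [d sE] : principal r s by apply: sub; exists 1; rewrite mul1r.
    by right; exists d; rewrite exprS xE sE; ring.
  + have [e rE] : principal s r by apply: sub; exists 1; rewrite mul1r.
    by left; exists e; rewrite exprS xE rE; ring.
- by right; exists (s * c); rewrite exprS cE; ring.
Qed.

Lemma notin_bigcap_iff x : ~ P x <-> exists n c, s ^+ n = c * x.
Proof.
split.
- move=> Px; apply: NNPP => noDiv; apply: Px => n.
  case: (pow_divides_or_divided x n) => // [[c cE]].
  by exfalso; apply: noDiv; exists n, c.
- move=> [n [c cE]] Px; apply: (pow_notin_bigcap n); rewrite cE.
  exact: (proj2 (proj2 bigcap_pow_ideal)).
Qed.

(* P is prime: a product of two divisors of powers of s divides a power of s,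
   and 1 is not in P. *)
Lemma bigcap_pow_prime : is_prime_ideal P.
Proof.
split; first exact: bigcap_pow_ideal.
split; first by rewrite -(expr0 s); apply: pow_notin_bigcap.
move=> a b Pab; apply: NNPP => /not_or_and [/notin_bigcap_iff [n [c aE]]].
move=> /notin_bigcap_iff [m [d bE]].
apply: (pow_notin_bigcap (n + m)); rewrite exprD aE bE.
have -> : c * a * (d * b) = (c * d) * (a * b) by ring.
exact: (proj2 (proj2 bigcap_pow_ideal)).
Qed.

Lemma subset_bigcap_iff_D Q : is_prime_ideal Q -> (subset_of Q P <-> D s Q).
Proof.
move=> Qprime; split.
- by move=> QP Qs; apply: (pow_notin_bigcap 1); rewrite expr1; apply: QP.
- move=> Qs x Qx; apply: NNPP => /notin_bigcap_iff [n [c cE]].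
  apply/Qs/(prime_pow_mem Q s n Qprime); rewrite cE.
  exact: (proj2 (proj2 (proj1 Qprime))).
Qed.

(* An ideal meeting R \ P contains a power of s, hence all of P. *)
Lemma bigcap_pow_divided : divided P.
Proof.
split; first exact: bigcap_pow_prime.
move=> I Iideal; case: (classic (exists x, I x /\ ~ P x)).
- move=> [x [Ix /notin_bigcap_iff [n [c cE]]]]; right => z Pz.
  have [r ->] := Pz n; rewrite cE mulrA.
  exact: (proj2 (proj2 Iideal)).
- by move=> noOut; left => x Ix; apply: NNPP => Px; apply: noOut; exists x.
Qed.

(* R/P is a valuation domain: for b outside P with s^n = c b, compare a c
   with s^n and cancel the regular element c. *)
Lemma bigcap_pow_valuation : quotient_valuation_domain P.
Proof.
split; first exact: bigcap_pow_prime.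
move=> a b; case: (classic (P b)) => [Pb|/notin_bigcap_iff [n [c cE]]].
  by left; exists 0; rewrite mul0r subr0.
have c_reg : regular c.
  move=> x cx0; apply: (regular_pow n).
  have -> : s ^+ n * x = b * (c * x) by rewrite cE; ring.
  by rewrite cx0 mulr0.
have P0 := proj1 bigcap_pow_ideal.
case: (pow_divides_or_divided (a * c) n) => [[r acE]|[d dE]].
- right; exists r; suff -> : a - r * b = 0 by [].
  apply: c_reg; have -> : c * (a - r * b) = a * c - r * (c * b) by ring.
  by rewrite -cE acE subrr.
- left; exists d; suff -> : b - d * a = 0 by [].
  apply: c_reg; have -> : c * (b - d * a) = c * b - d * (a * c) by ring.
  by rewrite -cE dE subrr.
Qed.

End PowerIntersection.

Section LocalizationAtPowers.
Context {R S : comUnitRingType} {s : R} {f : {rmorphism R -> S}}.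

Local Notation P := (bigcap_pow s).

Hypothesis s_reg : regular s.
Hypothesis f_unit : forall m, powers s m -> f m \is a GRing.unit.
Hypothesis f_ker : forall x, f x = 0 -> exists m, powers s m /\ x * m = 0.
Hypothesis f_frac : forall y, exists a m, powers s m /\ y * f m = f a.

Lemma loc_fraction y : exists a n, y * f (s ^+ n) = f a.
Proof. by have [a [_ [[n ->] yE]]] := f_frac y; exists a, n. Qed.

Lemma loc_pow_unit n : f (s ^+ n) \is a GRing.unit.
Proof. by apply: f_unit; exists n. Qed.

(* Since s is regular, the localization map is injective. *)
Lemma loc_injective : injective f.
Proof.
move=> x z fxz; have : f (x - z) = 0 by rewrite rmorphB fxz subrr.
move/f_ker => [_ [[k ->] xzk]]; apply: subr0_eq; apply: (regular_pow s_reg k).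
by rewrite mulrC.
Qed.

(* f(P) is already an ideal of R_s: y f(x) = f(a) f(x) / f(s^n), and
   x = r s^n with r in P, so y f(x) = f(a r). *)
Lemma image_bigcap_ideal : is_ideal (image_ideal f P).
Proof.
have [P0 [PD PM]] := bigcap_pow_ideal (s:=s).
split; first by exists 0; rewrite rmorph0.
split.
- move=> _ _ [x [Px ->]] [z [Pz ->]].
  by exists (x + z); rewrite rmorphD; split; first exact: PD.
- move=> y _ [x [Px ->]]; have [a [n yE]] := loc_fraction y.
  have [r [Pr xE]] := bigcap_pow_cofactor s_reg _ n Px.
  exists (a * r); split; first exact: PM.
  by rewrite xE !rmorphM -yE; ring.
Qed.

Lemma extended_bigcap_iff_image y :
  extended_ideal f P y <-> image_ideal f P y.
Proof.
split; first by apply; [exact: image_bigcap_ideal | move=> x Px; exists x].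
by move=> [x [Px ->]] J _; apply.
Qed.

Lemma extended_bigcap_ideal : is_ideal (extended_ideal f P).
Proof. exact: is_ideal_ext extended_bigcap_iff_image image_bigcap_ideal. Qed.

Hypothesis s_nonunit : s \notin GRing.unit.
Hypothesis s_cmp : forall I, is_ideal I ->
  subset_of (principal s) I \/ subset_of I (principal s).

(* Elements outside P divide a power of s, so they become units in R_s:
   R_s is also the localization of R at R \ P, i.e. R_s = R_P. *)
Lemma loc_at_compl : is_localization (compl P) f.
Proof.
split.
  move=> m /(notin_bigcap_iff s_reg s_nonunit s_cmp) [n [c cE]].
  by move: (loc_pow_unit n); rewrite cE rmorphM unitrM => /andP [].
split.
  move=> x; rewrite -(rmorph0 f) => /loc_injective ->.
  by exists 1; rewrite mul0r; split => //; apply: (pow_notin_bigcap s_reg s_nonunit 0).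
move=> y; have [a [n yE]] := loc_fraction y.
by exists a, (s ^+ n); split => //; apply: pow_notin_bigcap.
Qed.

(* Every element of R_s outside P R_s is a unit: writing y = f(a) / f(s^n),
   a lies outside P, so c a = s^k and y f(c s^n) = f(s^k). *)
Lemma unit_notin_extended y : ~ extended_ideal f P y -> y \is a GRing.unit.
Proof.
move=> Jy; have [a [n yE]] := loc_fraction y.
have /(notin_bigcap_iff s_reg s_nonunit s_cmp) [k [c cE]] : ~ P a.
  move=> Pa; apply/Jy/extended_bigcap_iff_image.
  have [r [Pr aE]] := bigcap_pow_cofactor s_reg _ n Pa.
  exists r; split => //; apply: (mulIr (loc_pow_unit n)).
  by rewrite yE aE rmorphM.
have yU : y * (f (s ^+ n) * f c) = f (s ^+ k) by rewrite mulrA yE -rmorphM mulrC cE.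
by move: (loc_pow_unit k); rewrite -yU unitrM => /andP [].
Qed.

Lemma extended_bigcap_maximal : is_maximal_ideal (extended_ideal f P).
Proof.
have [_ [P1 _]] := bigcap_pow_prime s_reg s_nonunit s_cmp.
split; first exact: extended_bigcap_ideal.
split.
  move/extended_bigcap_iff_image => [x [Px]].
  by rewrite -(rmorph1 f) => /loc_injective x1; apply: P1; rewrite x1.
move=> K [_ [_ KM]] JK; case: (classic (exists y, K y /\ ~ extended_ideal f P y)).
- move=> [y [Ky /unit_notin_extended yU]]; right.
  by rewrite -(mulVr yU); apply: KM.
- by move=> noOut; left => y Ky; apply: NNPP => Jy; apply: noOut; exists y.
Qed.

Lemma quotient_field_bigcap : quotient_field_of f P (extended_ideal f P).
Proof.
split; first exact: extended_bigcap_maximal.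
split.
  move=> x; rewrite extended_bigcap_iff_image.
  by split; [move=> [z [Pz /loc_injective ->]] | exists x].
move=> y; have [a [n yE]] := loc_fraction y.
exists a, (s ^+ n); split; first exact: pow_notin_bigcap.
by rewrite yE subrr; apply: (proj1 extended_bigcap_ideal).
Qed.

End LocalizationAtPowers.

Theorem mainTheorem8 (R S : comUnitRingType) (s : R) (f : {rmorphism R -> S}) :
  is_local_ring R -> strong_divisor s -> s \notin GRing.unit ->
  is_localization (powers s) f ->
  let P := bigcap_pow s in
  is_prime_ideal P /\
  zariski_open (fun Q => subset_of Q P) /\
  (forall Q, is_prime_ideal Q -> (subset_of Q P <-> D s Q)) /\
  is_localization (compl P) f /\
  (forall y, extended_ideal f P y <-> image_ideal f P y) /\
  divided P /\
  quotient_valuation_domain P /\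
  quotient_field_of f P (extended_ideal f P).
Proof.
move=> _ [s_reg s_cmp] s_nonunit [f_unit [f_ker f_frac]] P.
have D_iff := subset_bigcap_iff_D s_reg s_nonunit s_cmp.
split; first exact: (bigcap_pow_prime s_reg s_nonunit s_cmp).
split.
  (* the set of primes inside P is the basic open set D(s) *)
  move=> Q Qprime /(D_iff Q Qprime) Qs; exists s; split => // Q' Q'prime.
  exact: (proj2 (D_iff Q' Q'prime)).
split; first exact: D_iff.
split; first exact: (loc_at_compl s_reg f_unit f_ker f_frac s_nonunit s_cmp).
split; first exact: (extended_bigcap_iff_image s_reg f_frac).
split; first exact: (bigcap_pow_divided s_reg s_nonunit s_cmp).
split; first exact: (bigcap_pow_valuation s_reg s_nonunit s_cmp).
exact: (quotient_field_bigcap s_reg f_unit f_ker f_frac s_nonunit s_cmp).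
Qed.
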